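(* Let $1\le m\le n$ and let $h:[0,1]^{n-m+1}\rightarrow\mathbb{R}$ be any function. Define $g:[0,1]^n\rightarrow\mathbb{R}$ by $$g(w_1,\dots,w_n) = h\big(\max\{w_1,\dots,w_m\},\,w_{m+1},\dots,w_n\big).$$ Suppose that for each $i\in\{1,\dots,m\}$ the partial derivative $\frac{\partial g}{\partial w_i}(t\mathbf{1})$ exists for almost every $t\in[0,1]$ and $t\mapsto \frac{\partial g}{\partial w_i}(t\mathbf{1})$ is integrable on $[0,1]$. Then the integrated-gradients attributions with baseline $\mathbf{0}$ of the features $1,\dots,m$ are all equal, i.e. $$\int_0^1 \frac{\partial g}{\partial w_i}(t\mathbf{1})\,dt = \int_0^1 \frac{\partial g}{\partial w_j}(t\mathbf{1})\,dt \quad\text{for all } i,j\in\{1,\dots,m\}.$$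
   Context: $\mathbf{1}\in\mathbb{R}^n$ denotes the all-ones vector. For a function $g:[0,1]^n\to\mathbb{R}$, the integrated-gradients attribution of feature $i$ with baseline $\mathbf{0}$ (input $\mathbf{1}$) is $\int_0^1 \frac{\partial g}{\partial w_i}(t\mathbf{1})\,dt$. Features $1,\dots,m$ are called redundant because $g$ depends on them only through their maximum. *)

From HB Require Import structures.
From mathcomp Require Import all_boot all_order all_algebra.
From mathcomp Require Import all_classical all_reals all_analysis.
Set Implicit Arguments. Unset Strict Implicit. Unset Printing Implicit Defensive.
Import Order.TTheory GRing.Theory Num.Theory.
Import numFieldNormedType.Exports.
Local Open Scope ring_scope.

(* j-th coordinate (0-based) of w, as a total function of j : nat
   (0 when j >= n; never used out of range in the statement). *)
Definition coord_at (R : realType) (n : nat) (w : 'rV[R]_n) (j : nat) : R :=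
  if @insub _ (fun k => (k < n)%N) 'I_n j is Some i then w 0 i else 0.

(* max{w_1, ..., w_m} (0-based: coordinates 0..m-1); for m >= 1 the seed
   w_1 of the fold is itself one of the maximised values. *)
Definition max_first (R : realType) (n m : nat) (w : 'rV[R]_n) : R :=
  \big[Num.max/coord_at w 0]_(j < m) coord_at w j.

Definition redundant_g (R : realType) (n m : nat)
    (h : 'rV[R]_(n - m + 1) -> R) (w : 'rV[R]_n) : R :=
  h (\row_(k < n - m + 1)
       (if k == 0 :> nat then max_first m w else coord_at w (k + m - 1))).

Definition diag_pt (R : realType) (n : nat) (t : R) : 'rV[R]_n := const_mx t.

Definition basis_vec (R : realType) (n : nat) (i : 'I_n) : 'rV[R]_n :=
  delta_mx 0 i.

(* integrated-gradients attribution of feature i, baseline 0, input 1 *)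
Definition ig_attr (R : realType) (n : nat) (g : 'rV[R]_n -> R) (i : 'I_n) : R :=
  Rintegral (@lebesgue_measure R) `[0, 1]%classic
    (fun t => 'D_(@basis_vec R n i) g (@diag_pt R n t)).

(* Along the lines t1 + s e_i through the diagonal, g does not depend on which
   redundant feature i <= m is moved: the maximum of t, ..., t, t + s, t, ..., t
   is max(t, t + s) wherever the t + s sits, and the remaining arguments of h
   stay equal to t.  Hence the directional derivatives of g along e_i and e_j
   coincide at every diagonal point (as limits of identical difference
   quotients, whether or not they exist), and so do their integrals. *)

From HB Require Import structures.
From mathcomp Require Import all_boot all_order all_algebra.
From mathcomp Require Import all_classical all_reals all_analysis.
From mathcomp Require Import zify.
Import Order.TTheory GRing.Theory Num.Theory.
Import numFieldNormedType.Exports.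
Local Open Scope ring_scope.
Local Open Scope classical_set_scope.

Lemma eq_derive_dir (K : numFieldType) (V W : normedModType K)
    (f : V -> W) (a v w : V) :
  (forall s : K, f (s *: v + a) = f (s *: w + a)) -> 'D_v f a = 'D_w f a.
Proof.
move=> eq_lines; rewrite /derive.
suff -> : (fun s : K => s^-1 *: ((f \o shift a) (s *: v) - f a)) =
          (fun s : K => s^-1 *: ((f \o shift a) (s *: w) - f a)) by [].
by apply: funext => s /=; rewrite eq_lines.
Qed.

Section ShiftedDiagonal.
Variables (R : realType) (n : nat).

Lemma coord_at_shift_diag (i : 'I_n) (s t : R) (j : nat) : (j < n)%N ->
  coord_at (s *: basis_vec R i + diag_pt n t) j = s * (j == i)%:R + t.
Proof. by move=> jn; rewrite /coord_at insubT !mxE. Qed.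

Lemma max_first_shift_diag (m : nat) (i : 'I_n) (k : nat) (s t : R) :
  (m <= n)%N -> (i < m)%N -> (k < m)%N -> k != i ->
  max_first m (s *: basis_vec R i + diag_pt n t) = Num.max t (s + t).
Proof.
move=> mn im km ki; rewrite /max_first.
set w := s *: basis_vec R i + diag_pt n t.
have coordE j : (j < m)%N -> coord_at w j = s * (j == i)%:R + t.
  by move=> jm; apply: coord_at_shift_diag; apply: leq_trans mn.
have coord_le j : (j < m)%N -> coord_at w j <= Num.max t (s + t).
  by move=> jm; rewrite coordE //; case: (j == i :> nat);
    rewrite ?mulr1 ?mulr0 ?add0r le_max lexx ?orbT.
apply/le_anti/andP; split.
  by apply: bigmax_le => [|j _]; apply: coord_le; [apply: leq_ltn_trans km|].
rewrite ge_max; apply/andP; split.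
- have := le_bigmax (coord_at w 0) (fun j : 'I_m => coord_at w j) (Ordinal km).
  by rewrite /= coordE // (negbTE ki) mulr0 add0r.
- have := le_bigmax (coord_at w 0) (fun j : 'I_m => coord_at w j) (Ordinal im).
  by rewrite /= coordE // eqxx mulr1.
Qed.

Lemma redundant_g_shift_diag_sym (m : nat) (h : 'rV[R]_(n - m + 1) -> R)
    (i j : 'I_n) (s t : R) :
  (m <= n)%N -> (i < m)%N -> (j < m)%N ->
  redundant_g h (s *: basis_vec R i + diag_pt n t) =
  redundant_g h (s *: basis_vec R j + diag_pt n t).
Proof.
move=> mn im jm; have [-> // | ij] := eqVneq i j.
rewrite /redundant_g; congr h; apply/rowP => k; rewrite !mxE.
case: eqP => [_ | k0].
  by rewrite (max_first_shift_diag m i j s t mn im jm) 1?eq_sym //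
    (max_first_shift_diag m j i s t mn jm im).
have kn : (k + m - 1 < n)%N by have := ltn_ord k; lia.
rewrite !coord_at_shift_diag //.
have [-> ->] : ((k + m - 1)%N == i :> nat) = false /\ ((k + m - 1)%N == j :> nat) = false.
  by split; apply/eqP; lia.
by [].
Qed.

End ShiftedDiagonal.

Theorem lemma2 (R : realType) (m n : nat) (hm1 : (1 <= m)%N) (hmn : (m <= n)%N)
  (h : 'rV[R]_(n - m + 1) -> R) :
  (forall i : 'I_n, (i < m)%N ->
     {ae @lebesgue_measure R, forall t : R, `[0, 1]%classic t ->
        derivable (@redundant_g R n m h) (@diag_pt R n t) (@basis_vec R n i)}
     /\ (@lebesgue_measure R).-integrable `[0, 1]%classic
          (fun t => ('D_(@basis_vec R n i) (@redundant_g R n m h) (@diag_pt R n t))%:E)) ->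
  forall i j : 'I_n, (i < m)%N -> (j < m)%N ->
    ig_attr (@redundant_g R n m h) i = ig_attr (@redundant_g R n m h) j.
Proof.
move=> _ i j im jm; rewrite /ig_attr; congr Rintegral; apply: funext => t.
by apply: eq_derive_dir => s; apply: redundant_g_shift_diag_sym.
Qed.
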